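(* Let $F$ be a Banach lattice and $\tau$ a uniformly exhaustive linear topology on $F$ weaker than the norm topology. (i) If $E\subset F$ is a closed subspace on which $\tau$ agrees with the norm topology, then $E$ is $n$-dispersed for some $n\in\mathbb{N}$. (ii) If a bounded operator $T:F\to H$ into a Banach space complements $\tau$, then $T$ is $n$-DNS for some $n\in\mathbb{N}$.
   Context: $\tau$ is uniformly exhaustive if for every $\tau$-neighborhood $U$ of $0$ there is $n$ such that there is no pairwise disjoint ($|f|\wedge|g|=0$) $n$-tuple of elements all outside $U$. $T$ complements $\tau$ if no net $(f_p)$ in the unit sphere $\mathrm{S}_F$ is $\tau$-null with $\|Tf_p\|\to0$. For $n\ge2$, $T$ is $n$-DNS if there is $r>0$ such that no pairwise disjoint $f_1,\dots,f_n\in\mathrm{S}_F$ satisfy $\|Tf_k\|\le r$ for all $k$; $E$ is $n$-dispersed if there is $r>0$ such that no pairwise disjoint $f_1,\dots,f_n\in\mathrm{S}_F$ satisfy $d(f_k,E)<r$ for all $k$. *)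

From HB Require Import structures.
From mathcomp Require Import all_boot all_order all_algebra.
From mathcomp Require Import all_classical all_reals all_analysis.
Set Implicit Arguments. Unset Strict Implicit. Unset Printing Implicit Defensive.
Import Order.TTheory GRing.Theory Num.Theory.
Import numFieldNormedType.Exports.
Local Open Scope classical_set_scope.
Local Open Scope ring_scope.

Section Defs.
Variable R : realType.

Section Lattice.
Variable F : normedModType R.
Variable le : F -> F -> Prop.

Definition is_sup (x y s : F) : Prop :=
  le x s /\ le y s /\ (forall u, le x u -> le y u -> le s u).
Definition is_inf (x y m : F) : Prop :=
  le m x /\ le m y /\ (forall u, le u x -> le u y -> le u m).
Definition is_abs (x a : F) : Prop := is_sup x (- x) a.

(* le makes F a (real) Banach lattice: F is a complete normed space
   (given by its type), le is a vector lattice order and the norm is a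
   lattice norm. *)
Definition banach_lattice_order : Prop :=
  (forall x, le x x) /\
  (forall x y, le x y -> le y x -> x = y) /\
  (forall x y z, le x y -> le y z -> le x z) /\
  (forall x y z, le x y -> le (x + z) (y + z)) /\
  (forall (a : R) x y, 0 <= a -> le x y -> le (a *: x) (a *: y)) /\
  (forall x y, exists s, is_sup x y s) /\
  (forall x y a b, is_abs x a -> is_abs y b -> le a b -> `|x| <= `|y|).

Definition ldisjoint (f g : F) : Prop :=
  exists a b, is_abs f a /\ is_abs g b /\ is_inf a b 0.

Definition pairwise_disjoint (n : nat) (f : 'I_n -> F) : Prop :=
  forall i j : 'I_n, i != j -> ldisjoint (f i) (f j).
End Lattice.

Section LinTop.
Variable F : normedModType R.
Variable tau : set (set F).  (* the tau-open sets *)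

Definition tnbhs (x : F) (U : set F) : Prop :=
  exists V, tau V /\ V x /\ V `<=` U.

Definition is_topology : Prop :=
  [/\ tau setT,
      (forall (I : Type) (A : I -> set F), (forall i, tau (A i)) ->
          tau (\bigcup_(i in setT) A i)) &
      (forall A B, tau A -> tau B -> tau (A `&` B))].

Definition linear_topology : Prop :=
  [/\ is_topology,
      (forall x y U, tnbhs (x + y) U -> exists V W,
          [/\ tnbhs x V, tnbhs y W & forall a b, V a -> W b -> U (a + b)]) &
      (forall (k : R) x U, tnbhs (k *: x) U -> exists e : R, exists V,
          [/\ 0 < e, tnbhs x V &
              forall (l : R) a, `|l - k| < e -> V a -> U (l *: a)])].

Definition weaker_than_norm : Prop := forall A, tau A -> open A.

Variable le : F -> F -> Prop.
Definition uniformly_exhaustive : Prop :=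
  forall U, tnbhs 0 U -> exists n : nat,
    ~ (exists f : 'I_n -> F, pairwise_disjoint le f /\ forall i, ~ U (f i)).

Definition agrees_on (E : set F) : Prop :=
  (forall A, open A -> exists B, tau B /\ A `&` E = B `&` E) /\
  (forall B, tau B -> exists A, open A /\ A `&` E = B `&` E).

Definition directed (D : Type) (dle : D -> D -> Prop) : Prop :=
  [/\ (exists d : D, True), (forall d, dle d d),
      (forall a b c, dle a b -> dle b c -> dle a c) &
      (forall a b, exists c, dle a c /\ dle b c)].

Definition eventually (D : Type) (dle : D -> D -> Prop) (P : D -> Prop) :=
  exists p0, forall p, dle p0 p -> P p.

Definition tau_null (D : Type) (dle : D -> D -> Prop) (f : D -> F) : Prop :=
  forall U, tnbhs 0 U -> eventually dle (fun p => U (f p)).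

Definition complements (H : normedModType R) (T : F -> H) : Prop :=
  forall (D : Type) (dle : D -> D -> Prop) (f : D -> F),
    directed dle ->
    ~ [/\ (forall p, `|f p| = 1), tau_null dle f &
          (forall e : R, 0 < e -> eventually dle (fun p => `|T (f p)| < e))].
End LinTop.

Section Disp.
Variable F : normedModType R.
Variable le : F -> F -> Prop.

Definition closed_subspace (E : set F) : Prop :=
  [/\ closed E, E 0, (forall x y, E x -> E y -> E (x + y)) &
      (forall (a : R) x, E x -> E (a *: x))].

Definition n_dispersed (n : nat) (E : set F) : Prop :=
  exists r : R, 0 < r /\
    ~ (exists f : 'I_n -> F, [/\ pairwise_disjoint le f,
          (forall k, `|f k| = 1) &
          (forall k, exists e, E e /\ `|f k - e| < r)]).

Definition n_DNS (H : normedModType R) (n : nat) (T : F -> H) : Prop :=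
  exists r : R, 0 < r /\
    ~ (exists f : 'I_n -> F, [/\ pairwise_disjoint le f,
          (forall k, `|f k| = 1) &
          (forall k, `|T (f k)| <= r)]).
End Disp.
End Defs.

From HB Require Import structures.
From mathcomp Require Import all_boot all_order all_algebra.
From mathcomp Require Import all_classical all_reals all_analysis.
From mathcomp Require Import lra.
Set Implicit Arguments. Unset Strict Implicit.
Import Order.TTheory GRing.Theory Num.Theory.
Import numFieldNormedType.Exports.
Local Open Scope classical_set_scope.
Local Open Scope ring_scope.

(* Both parts reduce to one separation property: there are a tau-neighbourhood
   U of 0 and r > 0 such that no unit vector within distance r of E (resp.
   with |Tf| <= r) lies in U.  Uniform exhaustivity then bounds the length of
   disjoint families of such vectors, since they all lie outside U.
   For (i), pick a tau-open B with B ∩ E = ball(0, 1/2) ∩ E and split B as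
   V + (norm ball): a unit vector of V close to e in E would put e in B, hence
   |e| < 1/2, which is impossible.  For (ii), if the separation failed, the
   choice of a bad vector for each pair (U, r) would be a tau-null net of unit
   vectors with T f -> 0, directed by shrinking U and r. *)

Section Separation.
Variables (R : realType) (F : normedModType R) (tau : set (set F)).

Lemma normr_lt_ball0 (e : R) (y : F) : ball (0 : F) e y <-> `|y| < e.
Proof. by rewrite -ball_normE /ball_ /= sub0r normrN. Qed.

Lemma tnbhs0_norm_ball (W : set F) :
  weaker_than_norm tau -> tnbhs tau 0 W ->
  exists2 d : R, 0 < d & forall y : F, `|y| < d -> W y.
Proof.
move=> weak [W' [/weak oW' [W'0 W'W]]].
have /nbhs_ballP[d d0 dW'] : nbhs (0 : F) W' by apply: open_nbhs_nbhs.
by exists d => // y /normr_lt_ball0 /dW' /W'W.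
Qed.

Lemma tnbhs0T : tau setT -> tnbhs tau 0 setT.
Proof. by exists setT. Qed.

Lemma tnbhs0I (U V : set F) :
  (forall A B, tau A -> tau B -> tau (A `&` B)) ->
  tnbhs tau 0 U -> tnbhs tau 0 V -> tnbhs tau 0 (U `&` V).
Proof.
move=> tauI [U' [tU' [U'0 U'U]]] [V' [tV' [V'0 V'V]]].
exists (U' `&` V'); split; first exact: tauI.
by split=> // x [/U'U ? /V'V ?].
Qed.

Lemma tnbhs0_add_norm_ball (B : set F) :
  linear_topology tau -> weaker_than_norm tau -> tnbhs tau 0 B ->
  exists V (d : R), [/\ tnbhs tau 0 V, 0 < d &
    forall x y, V x -> `|y| < d -> B (x + y)].
Proof.
move=> [_ tau_add _] weak nB.
have [|V [W [nV nW VW]]] := tau_add 0 0 B; first by rewrite addr0.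
have [d d0 dW] := tnbhs0_norm_ball weak nW.
by exists V, d; split=> // x y Vx /dW; apply: VW.
Qed.

Lemma uniformly_exhaustive_disjoint (le : F -> F -> Prop) (U : set F)
    (P : F -> Prop) :
  uniformly_exhaustive tau le -> tnbhs tau 0 U -> (forall f, P f -> ~ U f) ->
  exists n : nat, (2 <= n)%N /\
    ~ (exists f : 'I_n -> F, pairwise_disjoint le f /\ forall i, P (f i)).
Proof.
move=> ue /ue[n noU] PU; exists (maxn n 2); split; first exact: leq_maxr.
move=> [g [gdisj gP]]; apply: noU.
have le_n : (n <= maxn n 2)%N by exact: leq_maxl.
exists (fun i => g (widen_ord le_n i)); split=> [i j ij|i]; last exact/PU/gP.
by apply: gdisj; apply: contra ij => /eqP[] /val_inj ->.
Qed.

Lemma agrees_on_separated (E : set F) :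
  linear_topology tau -> weaker_than_norm tau -> E 0 -> agrees_on tau E ->
  exists U (r : R), [/\ tnbhs tau 0 U, 0 < r &
    forall f, `|f| = 1 -> (exists e, E e /\ `|f - e| < r) -> ~ U f].
Proof.
move=> lin weak E0 [norm_tau _].
have [B [tB BE]] := norm_tau _ (ball_open (0 : F) (1 / 2)).
have nB : tnbhs tau 0 B.
  exists B; split=> //; split=> //.
  have : (ball (0 : F) (1 / 2) `&` E) 0.
    by split=> //; apply/normr_lt_ball0; rewrite normr0; lra.
  by rewrite BE => -[].
have [V [d [nV d0 VB]]] := tnbhs0_add_norm_ball lin weak nB.
exists V, (Num.min d (1 / 2)); split=> [//||f f1 [e [Ee fe]] Vf].
  by rewrite lt_min d0 /=; lra.
have [fed fe2] : `|f - e| < d /\ `|f - e| < 1 / 2 by move: fe; rewrite lt_min => /andP.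
have : (B `&` E) e.
  split=> //; rewrite -(subrK f e) addrC; apply: VB => //.
  by rewrite -normrN opprB.
rewrite -BE => -[/normr_lt_ball0 e2 _].
have : `|f| <= `|e| + `|f - e| by rewrite -{1}(subrK e f) addrC ler_normD.
by rewrite f1; lra.
Qed.

Definition nbhs_radius := {p : set F * R | tnbhs tau 0 p.1 /\ 0 < p.2}.

Definition nbhs_radius_le (a b : nbhs_radius) : Prop :=
  (sval b).1 `<=` (sval a).1 /\ (sval b).2 <= (sval a).2.

Lemma nbhs_radius_directed : is_topology tau -> directed nbhs_radius_le.
Proof.
move=> [tauT _ tauI]; split.
- by exists (exist _ (setT, 1) (conj (tnbhs0T tauT) ltr01) : nbhs_radius).
- by move=> d; split.
- move=> a b c [ab1 ab2] [bc1 bc2]; split; last exact: le_trans bc2 ab2.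
  by move=> x /bc1 /ab1.
- move=> [[U1 r1] [nU1 r1_gt0]] [[U2 r2] [nU2 r2_gt0]].
  have r12_gt0 : 0 < Num.min r1 r2 by rewrite lt_min r1_gt0 r2_gt0.
  exists (exist _ (U1 `&` U2, Num.min r1 r2)
    (conj (tnbhs0I tauI nU1 nU2) r12_gt0) : nbhs_radius).
  by split; split=> /=; [move=> x []|rewrite ge_min lexx|move=> x []|
    rewrite ge_min lexx orbT].
Qed.

Lemma complements_separated (H : normedModType R) (T : F -> H) :
  is_topology tau -> complements tau T ->
  exists U (r : R), [/\ tnbhs tau 0 U, 0 < r &
    forall f, `|f| = 1 -> `|T f| <= r -> ~ U f].
Proof.
move=> top compl; apply: contrapT => not_sep.
have bad (p : nbhs_radius) :
    exists f, [/\ `|f| = 1, `|T f| <= (sval p).2 & (sval p).1 f].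
  case: p => [[U r] [nU r_gt0]] /=; apply: contrapT => none.
  apply: not_sep; exists U, r; split=> // f f1 Tf Uf.
  by apply: none; exists f.
have [g gbad] := choice bad.
have tauT : tau setT by case: top.
apply: (compl _ _ g (nbhs_radius_directed top)); split.
- by move=> p; case: (gbad p).
- move=> U nU; exists (exist _ (U, 1) (conj nU ltr01) : nbhs_radius).
  by move=> p [/= pU _]; case: (gbad p) => _ _ /pU.
- move=> e e_gt0; have e2_gt0 : 0 < e / 2 by rewrite divr_gt0.
  exists (exist _ (setT, e / 2) (conj (tnbhs0T tauT) e2_gt0) : nbhs_radius).
  move=> p [_ /= pe]; case: (gbad p) => _ Tg _.
  by apply: (le_lt_trans Tg); apply: (le_lt_trans pe); lra.
Qed.

End Separation.

Theorem mainTheorem13 (R : realType) (F : completeNormedModType R)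
  (le : F -> F -> Prop) (tau : set (set F)) :
  banach_lattice_order le ->
  linear_topology tau ->
  uniformly_exhaustive tau le ->
  weaker_than_norm tau ->
  (forall E : set F, closed_subspace E -> agrees_on tau E ->
     exists n : nat, (2 <= n)%N /\ n_dispersed le n E) /\
  (forall (H : completeNormedModType R) (T : {linear F -> H}),
     continuous T -> complements tau T ->
     exists n : nat, (2 <= n)%N /\ n_DNS le n T).
Proof.
move=> _ lin ue weak; split.
- move=> E [_ E0 _ _] agree.
  have [U [r [nU r_gt0 sepU]]] := agrees_on_separated lin weak E0 agree.
  have [|n [n2 no_family]] := uniformly_exhaustive_disjoint
    (P := fun f => `|f| = 1 /\ exists e, E e /\ `|f - e| < r) ue nU.
    by move=> f [f1 near_E]; apply: sepU.
  exists n; split=> //; exists r; split=> // -[f [fdisj f1 near_E]].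
  by apply: no_family; exists f; split=> [//|i]; split.
- move=> H T _ compl; case: lin => top _ _.
  have [U [r [nU r_gt0 sepU]]] := complements_separated top compl.
  have [|n [n2 no_family]] := uniformly_exhaustive_disjoint
    (P := fun f => `|f| = 1 /\ `|T f| <= r) ue nU.
    by move=> f [f1 Tf]; apply: sepU.
  exists n; split=> //; exists r; split=> // -[f [fdisj f1 Tf]].
  by apply: no_family; exists f; split=> [//|i]; split.
Qed.
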